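(* (Generalised Haldane relations.) Suppose the dynamic deficiency of the network is $0$, i.e. $\ker M=\ker\mathcal{L}(G)$. Let $G_1$ be a terminal strongly connected component of $G$, whose complexes (after reordering) are $C_1,\dots,C_k$, and let $\rho\in\ker\mathcal{L}(G)$ be a nonzero vector vanishing at all complexes outside $G_1$ (such a vector exists, is unique up to scaling, and has all entries $\rho_1,\dots,\rho_k$ nonzero). Then for every steady state $x$ and every $2\le i\le k$, \[x^{C_i}=\frac{\rho_i}{\rho_1}\,x^{C_1},\] these $k-1$ relations are type 1 complex-linear invariants on $C_1,\dots,C_k$, and they form a basis of $I_k$ (so $\dim I_k=k-1$).
   Context: Setup: species $S_1,\dots,S_n$, concentrations $x$, complexes $C_1,\dots,C_m\in\mathbb{Z}_{\ge0}^n$, reaction graph $G$ on complexes with positive edge labels $\kappa_{ij}$. Laplacian $\mathcal{L}(G)$: $\mathcal{L}(G)_{ji}=\kappa_{ij}$ for edges $C_i\to C_j$, other off-diagonal entries $0$, $\mathcal{L}(G)_{ii}=-\sum_j\kappa_{ij}$. $Y$ is the $n\times m$ matrix with columns $C_i$; $x^C=\prod_jx_j^{C(S_j)}$, $\Psi(x)=(x^{C_1},\dots,x^{C_m})^\top$; dynamics $dx/dt=Y\mathcal{L}(G)\Psi(x)$; $M=Y\mathcal{L}(G)$; steady state means $M\Psi(x)=0$. A strongly connected component (SCC) of $G$ is a maximal subgraph in which any two nodes are joined by directed paths in both directions; it is terminal if no edge leaves it. The dynamic deficiency is $\delta_D=\dim\ker M-\dim\ker\mathcal{L}(G)$. A type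 1 complex-linear invariant on $C_1,\dots,C_k$ is a polynomial $a_1x^{C_1}+\dots+a_kx^{C_k}$ with $(a_1,\dots,a_k,0,\dots,0)$ in the row span of $M$; $I_k$ is the space of these. *)

From HB Require Import structures.
From mathcomp Require Import all_boot all_order all_algebra.
Set Implicit Arguments. Unset Strict Implicit. Unset Printing Implicit Defensive.
Import Order.TTheory GRing.Theory Num.Theory.
Local Open Scope ring_scope.

(* Reaction network data:
   - n species, m complexes; complex i is the vector C i : 'I_n -> nat.
   - kappa : 'M_m, kappa i j = label of edge C_i -> C_j (0 = no edge);
     diagonal entries are ignored (no self-loops). *)

Definition edge (R : numDomainType) (m : nat) (kappa : 'M[R]_m) : rel 'I_m :=
  fun i j => (i != j) && (0 < kappa i j).

Definition laplacian (R : ringType) (m : nat) (kappa : 'M[R]_m) : 'M[R]_m :=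
  \matrix_(j, i) (if j == i then - \sum_(l | l != i) kappa i l else kappa i j).

Definition Ymx (R : ringType) (n m : nat) (C : 'I_m -> 'I_n -> nat) : 'M[R]_(n, m) :=
  \matrix_(s, i) (C i s)%:R.

Definition Mmx (R : ringType) (n m : nat) (C : 'I_m -> 'I_n -> nat)
  (kappa : 'M[R]_m) : 'M[R]_(n, m) := Ymx R C *m laplacian kappa.

Definition monomial (R : ringType) (n : nat) (x : 'I_n -> R) (c : 'I_n -> nat) : R :=
  \prod_(s < n) x s ^+ c s.

Definition Psi (R : ringType) (n m : nat) (C : 'I_m -> 'I_n -> nat)
  (x : 'I_n -> R) : 'cV[R]_m := \col_i monomial x (C i).

Definition steady_state (R : ringType) (n m : nat) (C : 'I_m -> 'I_n -> nat)
  (kappa : 'M[R]_m) (x : 'I_n -> R) : Prop :=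
  Mmx C kappa *m Psi C x = 0.

(* Dimension of the (column) kernel {v | A v = 0} of A : 'M_(p, q);
   kermx A^T is the row space {u | u A^T = 0}. *)
Definition dim_ker (F : fieldType) (p q : nat) (A : 'M[F]_(p, q)) : nat :=
  \rank (kermx A^T).

Definition dynamic_deficiency (F : fieldType) (n m : nat)
  (C : 'I_m -> 'I_n -> nat) (kappa : 'M[F]_m) : int :=
  (dim_ker (Mmx C kappa))%:Z - (dim_ker (laplacian kappa))%:Z.

Definition is_scc (R : numDomainType) (m : nat) (kappa : 'M[R]_m) (S : {set 'I_m}) : Prop :=
  [/\ S != set0,
      (forall i j, i \in S -> j \in S -> connect (edge kappa) i j) &
      (forall i j, i \in S -> connect (edge kappa) i j ->
                   connect (edge kappa) j i -> j \in S)].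

Definition terminal_scc (R : numDomainType) (m : nat) (kappa : 'M[R]_m) (S : {set 'I_m}) : Prop :=
  is_scc kappa S /\ (forall i j, i \in S -> edge kappa i j -> j \in S).

Definition supported_kernel_vector (R : ringType) (m : nat) (kappa : 'M[R]_m)
  (S : {set 'I_m}) (rho : 'cV[R]_m) : Prop :=
  [/\ rho != 0, laplacian kappa *m rho = 0 & (forall i, i \notin S -> rho i 0 = 0)].

(* Type 1 complex-linear invariant on the complexes in S, identified with its
   coefficient (row) vector a : 'rV_m: a vanishes outside S and lies in the
   row span of M. *)
Definition type1_invariant (F : fieldType) (n m : nat) (C : 'I_m -> 'I_n -> nat)
  (kappa : 'M[F]_m) (S : {set 'I_m}) (a : 'rV[F]_m) : Prop :=
  (forall i, i \notin S -> a 0 i = 0) /\ (a <= Mmx C kappa)%MS.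

(* Coefficient vector of the polynomial x^{C_i} - (rho_i/rho_{c1}) x^{C_{c1}}. *)
Definition haldane_vec (F : fieldType) (m : nat) (rho : 'cV[F]_m) (c1 i : 'I_m) : 'rV[F]_m :=
  \row_j ((j == i)%:R - (j == c1)%:R * (rho i 0 / rho c1 0)).

From HB Require Import structures.
From mathcomp Require Import all_boot all_order all_algebra.
Import Order.TTheory GRing.Theory Num.Theory.
Local Open Scope ring_scope.
Set Implicit Arguments. Unset Strict Implicit.

(* Since the off-diagonal
   entries of L(G) are nonnegative and its columns sum to zero, |v| lies in
   ker L(G) whenever v does, and then the equation of row j forces v to vanish
   at every complex with an edge into a zero of v.  Zeros therefore propagate
   backwards along paths, so on a strongly connected component every kernel
   vector is a multiple of rho (subtract the multiple vanishing at C_1).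
   A steady state x has Psi(x) in ker M = ker L(G), which gives the relations;
   the coefficient vectors of the relations annihilate ker M, hence lie in the
   row space of M; conversely every invariant annihilates rho, which fixes its
   C_1-coefficient in terms of the others. *)

Lemma sub_rowspace_kerP (F : fieldType) p q (M : 'M[F]_(p, q)) (a : 'rV[F]_q) :
  (forall v : 'cV[F]_q, M *m v = 0 -> a *m v = 0) -> (a <= M)%MS.
Proof.
move=> annih; rewrite submxE; apply/eqP/matrixP => i j; rewrite (ord1 i).
have Mcol0 : M *m col j (cokermx M) = 0 by rewrite colE mulmxA mulmx_coker mul0mx.
have := annih _ Mcol0; rewrite colE mulmxA -colE => /matrixP/(_ 0 0).
by rewrite !mxE.
Qed.

Lemma deficiency0_ker_laplacian (F : fieldType) n m (C : 'I_m -> 'I_n -> nat)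
    (kappa : 'M[F]_m) :
  dynamic_deficiency C kappa = 0 ->
  forall v : 'cV[F]_m, Mmx C kappa *m v = 0 -> laplacian kappa *m v = 0.
Proof.
rewrite /dynamic_deficiency /dim_ker => /eqP; rewrite subr_eq0 => /eqP [] eq_rank v Mv0.
have kerL_kerM : (kermx (laplacian kappa)^T <= kermx (Mmx C kappa)^T)%MS.
  by apply/sub_kermxP; rewrite trmx_mul mulmxA mulmx_ker mul0mx.
have kerM_kerL := (mxrank_leqif_sup kerL_kerM).2; rewrite eq_rank eqxx in kerM_kerL.
have /sub_kermxP : (v^T <= kermx (laplacian kappa)^T)%MS.
  by apply: submx_trans (esym kerM_kerL); apply/sub_kermxP; rewrite -trmx_mul Mv0 trmx0.
by rewrite -trmx_mul => /(congr1 trmx); rewrite trmxK trmx0.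
Qed.

Section Laplacian.

Variables (R : nzRingType) (m : nat) (kappa : 'M[R]_m).

Lemma laplacian_colsum i : \sum_j laplacian kappa j i = 0.
Proof.
rewrite (bigD1 i) //= mxE eqxx (eq_bigr (fun j => kappa i j)) ?addNr //.
by move=> j /negbTE ji; rewrite mxE ji.
Qed.

Lemma laplacian_mulmxE (v : 'cV[R]_m) j :
  (laplacian kappa *m v) j 0 =
  \sum_(i | i != j) kappa i j * v i 0 - (\sum_(l | l != j) kappa j l) * v j 0.
Proof.
rewrite mxE (bigD1 j) //= mxE eqxx addrC mulNr; congr (_ + _).
by apply: eq_bigr => i ij; rewrite mxE eq_sym (negbTE ij).
Qed.

End Laplacian.

Section NonnegativeLaplacian.

Variables (R : realFieldType) (m : nat) (kappa : 'M[R]_m).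
Hypothesis kappa_ge0 : forall i j, 0 <= kappa i j.

Lemma laplacian_ker_norm (v : 'cV[R]_m) :
  laplacian kappa *m v = 0 -> laplacian kappa *m (\col_i `|v i 0|) = 0.
Proof.
move=> Lv0; set w := \col_i `|v i 0|.
have Lw_ge0 j : 0 <= (laplacian kappa *m w) j 0.
  rewrite laplacian_mulmxE subr_ge0 mxE.
  have /matrixP/(_ j 0)/eqP := Lv0.
  rewrite laplacian_mulmxE mxE subr_eq0 => /eqP balance.
  have outflow_ge0 : 0 <= \sum_(l | l != j) kappa j l by exact: sumr_ge0.
  rewrite -(ger0_norm outflow_ge0) -normrM -balance.
  apply: le_trans (ler_norm_sum _ _ _) _.
  by apply: ler_sum => i _; rewrite normrM ger0_norm // mxE.
have sum_Lw : \sum_j (laplacian kappa *m w) j 0 = 0.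
  under eq_bigr do rewrite mxE.
  rewrite exchange_big big1 // => i _.
  by rewrite -mulr_suml laplacian_colsum mul0r.
apply/matrixP => j k; rewrite (ord1 k) [RHS]mxE.
exact: (psumr_eq0P (P := predT) (fun j _ => Lw_ge0 j) sum_Lw).
Qed.

Lemma laplacian_ker_edge0 (v : 'cV[R]_m) i j :
  laplacian kappa *m v = 0 -> edge kappa i j -> v j 0 = 0 -> v i 0 = 0.
Proof.
move=> Lv0 /andP [ij kij_gt0] vj0.
have /matrixP/(_ j 0) := laplacian_ker_norm Lv0.
rewrite laplacian_mulmxE mxE vj0 normr0 mulr0 subr0 mxE => inflow0.
have term_ge0 l : l != j -> 0 <= kappa l j * (\col_i `|v i 0|) l 0.
  by move=> _; rewrite mxE mulr_ge0.
have /eqP := psumr_eq0P term_ge0 inflow0 ij.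
by rewrite mxE mulf_eq0 normr_eq0 (gt_eqF kij_gt0) => /eqP.
Qed.

Lemma laplacian_ker_connect0 (v : 'cV[R]_m) i j :
  laplacian kappa *m v = 0 -> connect (edge kappa) i j -> v j 0 = 0 -> v i 0 = 0.
Proof.
move=> Lv0 /connectP [p path_ij ->] {j}.
elim: p i path_ij => [|k p IHp] i //= /andP [ik path_kj] vj0.
exact: laplacian_ker_edge0 Lv0 ik (IHp k path_kj vj0).
Qed.

Variables (S : {set 'I_m}) (rho : 'cV[R]_m).
Hypothesis S_connected : forall i j, i \in S -> j \in S -> connect (edge kappa) i j.
Hypothesis L_rho0 : laplacian kappa *m rho = 0.

Lemma laplacian_ker_scc_neq0 :
  rho != 0 -> (forall i, i \notin S -> rho i 0 = 0) -> forall i, i \in S -> rho i 0 != 0.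
Proof.
move=> rho_neq0 rho_supp j jS; apply: contra rho_neq0 => /eqP rhoj0.
apply/eqP/matrixP => i k; rewrite (ord1 k) mxE.
have [iS | /rho_supp //] := boolP (i \in S).
exact: laplacian_ker_connect0 L_rho0 (S_connected iS jS) rhoj0.
Qed.

Lemma laplacian_ker_scc_proportional c1 :
  c1 \in S -> rho c1 0 != 0 -> forall v : 'cV[R]_m, laplacian kappa *m v = 0 ->
  forall i, i \in S -> v i 0 = rho i 0 / rho c1 0 * v c1 0.
Proof.
move=> c1S rhoc1 v Lv0 i iS; set t := v c1 0 / rho c1 0.
have Ldiff0 : laplacian kappa *m (v - t *: rho) = 0.
  by rewrite mulmxBr -scalemxAr L_rho0 scaler0 Lv0 subr0.
have := laplacian_ker_connect0 Ldiff0 (S_connected iS c1S).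
rewrite !mxE /t divfK // subrr => /(_ erefl) /eqP.
by rewrite subr_eq0 => /eqP->; rewrite /t mulrC mulrA mulrAC.
Qed.

End NonnegativeLaplacian.

Section HaldaneVectors.

Variables (F : fieldType) (m : nat) (rho : 'cV[F]_m) (c1 : 'I_m).

Lemma haldane_vec_mulmx i (v : 'cV[F]_m) :
  (haldane_vec rho c1 i *m v) 0 0 = v i 0 - rho i 0 / rho c1 0 * v c1 0.
Proof.
rewrite mxE; under eq_bigr do rewrite mxE mulrBl -mulrA.
rewrite sumrB; congr (_ - _).
- by rewrite (bigD1 i) //= eqxx mul1r big1 ?addr0 // => j /negbTE->; rewrite mul0r.
- by rewrite (bigD1 c1) //= eqxx mul1r big1 ?addr0 // => j /negbTE->; rewrite mul0r.
Qed.

Lemma haldane_vec_out i k : k != i -> k != c1 -> haldane_vec rho c1 i 0 k = 0.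
Proof. by move=> /negbTE ki /negbTE kc1; rewrite mxE ki kc1 mul0r subr0. Qed.

Lemma haldane_combE (A : {set 'I_m}) (c : 'I_m -> F) k :
  (\sum_(i in A) c i *: haldane_vec rho c1 i) 0 k =
  (k \in A)%:R * c k - (k == c1)%:R * \sum_(i in A) c i * (rho i 0 / rho c1 0).
Proof.
rewrite summxE; under eq_bigr do rewrite !mxE mulrBr mulrCA.
rewrite sumrB -mulr_sumr; congr (_ - _).
rewrite big_mkcond (bigD1 k) //= eqxx mulr1 big1 ?addr0 => [|j /negbTE jk].
  by case: (k \in A); rewrite ?mul1r ?mul0r.
by rewrite eq_sym jk mulr0; case: (j \in A).
Qed.

Lemma haldane_comb_free (A : {set 'I_m}) (c : 'I_m -> F) :
  c1 \notin A -> \sum_(i in A) c i *: haldane_vec rho c1 i = 0 ->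
  forall i, i \in A -> c i = 0.
Proof.
move=> c1A comb0 i iA.
have /matrixP/(_ 0 i) := comb0; rewrite haldane_combE iA mxE mul1r.
have /negbTE-> : i != c1 by apply: contraNneq c1A => <-.
by rewrite mul0r subr0.
Qed.

Lemma haldane_vec_span (S : {set 'I_m}) (a : 'rV[F]_m) :
  c1 \in S -> rho c1 0 != 0 -> (forall i, i \notin S -> a 0 i = 0) -> a *m rho = 0 ->
  a = \sum_(i in S :\ c1) a 0 i *: haldane_vec rho c1 i.
Proof.
move=> c1S rhoc1 a_supp a_rho0.
have sum_off : \sum_(j | j != c1) a 0 j * rho j 0 = \sum_(j in S :\ c1) a 0 j * rho j 0.
  rewrite [LHS]big_mkcond [RHS]big_mkcond; apply: eq_bigr => j _.
  rewrite in_setD1; case: (j != c1) => //=.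
  by have [//|/a_supp->] := boolP (j \in S); rewrite mul0r.
have /matrixP/(_ 0 0) := a_rho0.
rewrite !mxE (bigD1 c1) //= sum_off => /eqP; rewrite addr_eq0 => /eqP c1_coef.
apply/matrixP => z k; rewrite (ord1 z) haldane_combE.
case: (eqVneq k c1) => [->|kc1].
  under eq_bigr do rewrite mulrA.
  by rewrite setD11 mul0r sub0r mul1r -mulr_suml -mulNr -c1_coef mulfK.
rewrite mul0r subr0 in_setD1 kc1 /=.
by have [|/a_supp->] := boolP (k \in S); rewrite ?mul1r ?mul0r.
Qed.

End HaldaneVectors.

Theorem mainTheorem3 (R : realFieldType) (n m : nat)
  (C : 'I_m -> 'I_n -> nat) (kappa : 'M[R]_m)
  (hkappa : forall i j, 0 <= kappa i j)
  (hdef : dynamic_deficiency C kappa = 0)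
  (S : {set 'I_m}) (hS : terminal_scc kappa S)
  (c1 : 'I_m) (hc1 : c1 \in S)
  (rho : 'cV[R]_m) (hrho : supported_kernel_vector kappa S rho) :
  [/\ (forall i, i \in S -> rho i 0 != 0),
      (forall rho', supported_kernel_vector kappa S rho' ->
         exists c : R, rho' = c *: rho),
      (forall x : 'I_n -> R, steady_state C kappa x ->
         forall i, i \in S -> i != c1 ->
           monomial x (C i) = rho i 0 / rho c1 0 * monomial x (C c1)),
      (forall i, i \in S -> i != c1 -> type1_invariant C kappa S (haldane_vec rho c1 i)) &
      ((forall c : 'I_m -> R,
          \sum_(i in S :\ c1) c i *: haldane_vec rho c1 i = 0 ->
          forall i, i \in S :\ c1 -> c i = 0) /\
       (forall a : 'rV[R]_m, type1_invariant C kappa S a ->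
          exists c : 'I_m -> R, a = \sum_(i in S :\ c1) c i *: haldane_vec rho c1 i))].
Proof.
case: hS => [[_ S_connected _] _]; case: hrho => [rho_neq0 L_rho0 rho_supp].
have rho_neq0_S := laplacian_ker_scc_neq0 hkappa S_connected L_rho0 rho_neq0 rho_supp.
have proportional := laplacian_ker_scc_proportional hkappa S_connected L_rho0 hc1
  (rho_neq0_S c1 hc1).
have kerM_kerL := deficiency0_ker_laplacian hdef.
split=> [//||x steady i iS _|i iS _|].
- move=> rho' [_ L_rho'0 rho'_supp]; exists (rho' c1 0 / rho c1 0).
  apply/matrixP => i k; rewrite (ord1 k) mxE.
  have [iS|iNS] := boolP (i \in S).
    by rewrite (proportional _ L_rho'0) // mulrAC [RHS]mulrAC [_ * rho i 0]mulrC.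
  by rewrite (rho_supp _ iNS) (rho'_supp _ iNS) mulr0.
- by have := proportional _ (kerM_kerL _ steady) i iS; rewrite !mxE.
- split=> [k kNS|]; first by apply: haldane_vec_out; apply: contraNneq kNS => ->.
  apply: sub_rowspace_kerP => v Mv0; apply/matrixP => z z'.
  rewrite (ord1 z) (ord1 z') haldane_vec_mulmx mxE.
  by rewrite (proportional _ (kerM_kerL _ Mv0) i iS) subrr.
split=> [c comb0|]; first by apply: haldane_comb_free comb0; rewrite setD11.
move=> a [a_supp a_rowspace]; exists (fun i => a 0 i).
apply: haldane_vec_span => //; first exact: rho_neq0_S.
by case/submxP: a_rowspace => D ->; rewrite /Mmx -!mulmxA L_rho0 !mulmx0.
Qed.
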